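(* Let $\mathfrak{T}$ be a pre-Tannakian category over a field $k$ and let $A$ be a simple commutative algebra in $\mathfrak{T}$. Then $\Gamma(A)=\mathrm{Hom}(\mathbf{1},A)$ is a finite extension field of $k$.
   Context: Pre-Tannakian: abelian $k$-linear symmetric monoidal category (bilinear tensor product) with all objects of finite length, finite-dimensional Hom spaces, all objects rigid, $\mathrm{End}(\mathbf{1})=k$. An algebra is a commutative, unital, associative algebra object; an ideal of $A$ is an $A$-submodule of $A$; $A$ is simple if it is nonzero and its only ideals are $0$ and $A$. $\Gamma(A)$ is a finite-dimensional commutative $k$-algebra. *)

From HB Require Import structures.
From mathcomp Require Import all_boot all_algebra.

Set Implicit Arguments.
Unset Strict Implicit.
Unset Printing Implicit Defensive.

Import GRing.Theory.
Local Open Scope ring_scope.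

(* Mor X Y is a vectType k, i.e. a finite-dimensional k-vector space.   *)
Record kcat (k : fieldType) := KCat {
  Obj : Type;
  Mor : Obj -> Obj -> vectType k;
  idm : forall X, Mor X X;
  cmp : forall X Y Z, Mor Y Z -> Mor X Y -> Mor X Z;
  compA : forall X Y Z W (f : Mor X Y) (g : Mor Y Z) (h : Mor Z W),
      cmp h (cmp g f) = cmp (cmp h g) f;
  comp1m : forall X Y (f : Mor X Y), cmp (idm Y) f = f;
  compm1 : forall X Y (f : Mor X Y), cmp f (idm X) = f;
  comp_linl : forall X Y Z (a : k) (g g' : Mor Y Z) (f : Mor X Y),
      cmp (a *: g + g') f = a *: cmp g f + cmp g' f;
  comp_linr : forall X Y Z (a : k) (g : Mor Y Z) (f f' : Mor X Y),
      cmp g (a *: f + f') = a *: cmp g f + cmp g f'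
}.

Arguments Obj {_} _.
Arguments Mor {_ _} _ _.
Arguments idm {_ _} _.
Arguments cmp {_ _ _ _ _} _ _.

Section CatDefs.
Variables (k : fieldType) (C : kcat k).

Definition is_zero_obj (Z : Obj C) : Prop := idm Z = 0.

Definition is_iso (X Y : Obj C) (f : Mor X Y) : Prop :=
  exists g : Mor Y X, cmp g f = idm X /\ cmp f g = idm Y.

Definition mono (X Y : Obj C) (f : Mor X Y) : Prop :=
  forall W (g h : Mor W X), cmp f g = cmp f h -> g = h.

Definition epi (X Y : Obj C) (f : Mor X Y) : Prop :=
  forall W (g h : Mor Y W), cmp g f = cmp h f -> g = h.

Definition is_kernel (X Y K : Obj C) (f : Mor X Y) (i : Mor K X) : Prop :=
  cmp f i = 0 /\
  forall W (g : Mor W X), cmp f g = 0 -> exists! h : Mor W K, cmp i h = g.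

Definition is_cokernel (X Y Q : Obj C) (f : Mor X Y) (p : Mor Y Q) : Prop :=
  cmp p f = 0 /\
  forall W (g : Mor Y W), cmp g f = 0 -> exists! h : Mor Q W, cmp h p = g.

Definition is_biproduct (X Y P : Obj C) (i1 : Mor X P) (i2 : Mor Y P)
  (p1 : Mor P X) (p2 : Mor P Y) : Prop :=
  [/\ cmp p1 i1 = idm X, cmp p2 i2 = idm Y, cmp p1 i2 = 0, cmp p2 i1 = 0
    & cmp i1 p1 + cmp i2 p2 = idm P].

(* abelian (the category is already k-linear, hence preadditive) *)
Definition abelian : Prop :=
  [/\ (exists Z : Obj C, is_zero_obj Z),
      (forall X Y : Obj C, exists P (i1 : Mor X P) (i2 : Mor Y P)
         (p1 : Mor P X) (p2 : Mor P Y), is_biproduct i1 i2 p1 p2),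
      (forall (X Y : Obj C) (f : Mor X Y),
         (exists K (i : Mor K X), is_kernel f i) /\
         (exists Q (p : Mor Y Q), is_cokernel f p)),
      (forall (X Y : Obj C) (f : Mor X Y), mono f ->
          exists Z (g : Mor Y Z), is_kernel g f)
    & (forall (X Y : Obj C) (f : Mor X Y), epi f ->
          exists Z (g : Mor Z X), is_cokernel g f)].

(* subobjects of X: monos into X, ordered by factorization *)
Definition sub_le (X : Obj C) (s t : {S : Obj C & Mor S X}) : Prop :=
  exists h : Mor (projT1 s) (projT1 t), cmp (projT2 t) h = projT2 s.

Definition sub_lt (X : Obj C) (s t : {S : Obj C & Mor S X}) : Prop :=
  sub_le s t /\ ~ sub_le t s.

Definition finite_length_obj (X : Obj C) : Prop :=
  exists n : nat, forall c : nat -> {S : Obj C & Mor S X},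
    (forall i, mono (projT2 (c i))) ->
    exists i, (i < n)%N /\ ~ sub_lt (c i) (c i.+1).

Definition finite_length : Prop := forall X : Obj C, finite_length_obj X.

End CatDefs.

Record smc (k : fieldType) (C : kcat k) := SMC {
  tens : Obj C -> Obj C -> Obj C;
  tensm : forall X X' Y Y', Mor X X' -> Mor Y Y' -> Mor (tens X Y) (tens X' Y');
  unitob : Obj C;
  alpha : forall X Y Z, Mor (tens (tens X Y) Z) (tens X (tens Y Z));
  alphai : forall X Y Z, Mor (tens X (tens Y Z)) (tens (tens X Y) Z);
  lam : forall X, Mor (tens unitob X) X;
  lami : forall X, Mor X (tens unitob X);
  rho : forall X, Mor (tens X unitob) X;
  rhoi : forall X, Mor X (tens X unitob);
  beta : forall X Y, Mor (tens X Y) (tens Y X);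
  tensm_id : forall X Y, tensm (idm X) (idm Y) = idm (tens X Y);
  tensm_comp : forall X X' X'' Y Y' Y'' (f : Mor X X') (g : Mor X' X'')
      (f' : Mor Y Y') (g' : Mor Y' Y''),
      tensm (cmp g f) (cmp g' f') = cmp (tensm g g') (tensm f f');
  tensm_linl : forall X X' Y Y' (a : k) (f f' : Mor X X') (g : Mor Y Y'),
      tensm (a *: f + f') g = a *: tensm f g + tensm f' g;
  tensm_linr : forall X X' Y Y' (a : k) (f : Mor X X') (g g' : Mor Y Y'),
      tensm f (a *: g + g') = a *: tensm f g + tensm f g';
  alphaK : forall X Y Z, cmp (alphai X Y Z) (alpha X Y Z) = idm _;
  alphaKV : forall X Y Z, cmp (alpha X Y Z) (alphai X Y Z) = idm _;
  lamK : forall X, cmp (lami X) (lam X) = idm _;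
  lamKV : forall X, cmp (lam X) (lami X) = idm _;
  rhoK : forall X, cmp (rhoi X) (rho X) = idm _;
  rhoKV : forall X, cmp (rho X) (rhoi X) = idm _;
  alpha_nat : forall X X' Y Y' Z Z' (f : Mor X X') (g : Mor Y Y') (h : Mor Z Z'),
      cmp (alpha X' Y' Z') (tensm (tensm f g) h)
      = cmp (tensm f (tensm g h)) (alpha X Y Z);
  lam_nat : forall X X' (f : Mor X X'),
      cmp (lam X') (tensm (idm unitob) f) = cmp f (lam X);
  rho_nat : forall X X' (f : Mor X X'),
      cmp (rho X') (tensm f (idm unitob)) = cmp f (rho X);
  beta_nat : forall X X' Y Y' (f : Mor X X') (g : Mor Y Y'),
      cmp (beta X' Y') (tensm f g) = cmp (tensm g f) (beta X Y);
  pentagon : forall W X Y Z,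
      cmp (alpha W X (tens Y Z)) (alpha (tens W X) Y Z)
      = cmp (tensm (idm W) (alpha X Y Z))
             (cmp (alpha W (tens X Y) Z) (tensm (alpha W X Y) (idm Z)));
  triangle : forall X Y,
      cmp (tensm (idm X) (lam Y)) (alpha X unitob Y) = tensm (rho X) (idm Y);
  symmetry : forall X Y, cmp (beta Y X) (beta X Y) = idm (tens X Y);
  hexagon : forall X Y Z,
      cmp (alpha Y Z X) (cmp (beta X (tens Y Z)) (alpha X Y Z))
      = cmp (tensm (idm Y) (beta X Z))
             (cmp (alpha Y X Z) (tensm (beta X Y) (idm Z)))
}.

Arguments tens {_ _} _ _ _.
Arguments tensm {_ _} _ {_ _ _ _} _ _.
Arguments unitob {_ _} _.
Arguments alpha {_ _} _ _ _ _.
Arguments alphai {_ _} _ _ _ _.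
Arguments lam {_ _} _ _.
Arguments lami {_ _} _ _.
Arguments rho {_ _} _ _.
Arguments rhoi {_ _} _ _.
Arguments beta {_ _} _ _ _.

Section MonDefs.
Variables (k : fieldType) (C : kcat k) (M : smc C).

Local Notation "X ⊗ Y" := (tens M X Y) (at level 40, left associativity).
Local Notation "f ⊗m g" := (tensm M f g) (at level 40, left associativity).
Local Notation "'𝟙'" := (unitob M).

Definition is_dual (X D : Obj C) (ev : Mor (D ⊗ X) 𝟙) (coev : Mor 𝟙 (X ⊗ D)) : Prop :=
  cmp (rho M X) (cmp (idm X ⊗m ev) (cmp (alpha M X D X)
         (cmp (coev ⊗m idm X) (lami M X)))) = idm X /\
  cmp (lam M D) (cmp (ev ⊗m idm D) (cmp (alphai M D X D)
         (cmp (idm D ⊗m coev) (rhoi M D)))) = idm D.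

(* every object is rigid (in a symmetric category left duals suffice) *)
Definition rigid : Prop :=
  forall X : Obj C, exists D (ev : Mor (D ⊗ X) 𝟙) (coev : Mor 𝟙 (X ⊗ D)),
    is_dual ev coev.

Definition end_unit_is_k : Prop :=
  idm 𝟙 <> 0 /\ forall f : Mor 𝟙 𝟙, exists c : k, f = c *: idm 𝟙.

Definition comm_algebra (A : Obj C) (mu : Mor (A ⊗ A) A) (eta : Mor 𝟙 A) : Prop :=
  [/\ cmp mu (mu ⊗m idm A) = cmp mu (cmp (idm A ⊗m mu) (alpha M A A A)),
      cmp mu (eta ⊗m idm A) = lam M A,
      cmp mu (idm A ⊗m eta) = rho M A
    & cmp mu (beta M A A) = mu].

(* an ideal of A: an A-submodule of A, i.e. a subobject i : I -> A such that
   the multiplication A ⊗ I -> A factors through I *)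
Definition is_ideal (A : Obj C) (mu : Mor (A ⊗ A) A) (I : Obj C) (i : Mor I A) : Prop :=
  mono i /\ exists act : Mor (A ⊗ I) I, cmp i act = cmp mu (idm A ⊗m i).

Definition simple_algebra (A : Obj C) (mu : Mor (A ⊗ A) A) : Prop :=
  ~ is_zero_obj A /\
  forall (I : Obj C) (i : Mor I A), is_ideal mu i -> is_zero_obj I \/ is_iso i.

Definition gamma_mul (A : Obj C) (mu : Mor (A ⊗ A) A) (a b : Mor 𝟙 A) : Mor 𝟙 A :=
  cmp mu (cmp (a ⊗m b) (lami M 𝟙)).

(* Gamma(A) (a commutative k-algebra, finite-dimensional since Mor(1,A) is a
   vectType k, with unitob eta) is a field *)
Definition gamma_is_field (A : Obj C) (mu : Mor (A ⊗ A) A) (eta : Mor 𝟙 A) : Prop :=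
  eta <> 0 /\ forall a : Mor 𝟙 A, a <> 0 -> exists b : Mor 𝟙 A, gamma_mul mu a b = eta.

End MonDefs.

Record preTannakian (k : fieldType) := PreTannakian {
  ptC : kcat k;
  ptM : smc ptC;
  pt_abelian : abelian ptC;
  pt_finite_length : finite_length ptC;
  pt_rigid : rigid ptM;
  pt_end_unit : end_unit_is_k ptM
}.

(* For a : 1 -> A let m_a : A -> A be multiplication by a.  Since A is
   commutative, m_a is A-linear, so its kernel is an ideal.  By simplicity
   the kernel is A or 0.  It cannot be A: m_a applied to the unit recovers a
   (up to the unitors), so m_a = 0 forces a = 0.  Hence m_a is a monomorphism,
   so postcomposition with m_a is an injective linear endomorphism of the
   finite-dimensional space Hom(1, A), hence surjective, and a preimage of
   the unit is an inverse of a in Gamma(A). *)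
From HB Require Import structures.
From mathcomp Require Import all_boot all_algebra.

Set Implicit Arguments.
Unset Strict Implicit.
Unset Printing Implicit Defensive.

Import GRing.Theory.
Local Open Scope ring_scope.

Section KLinearCategory.
Variables (k : fieldType) (C : kcat k).
Local Notation Hom X Y := (@Mor _ C X Y).

Definition postcomp X Y Z (g : Hom Y Z) (f : Hom X Y) : Hom X Z := cmp g f.
Definition precomp X Y Z (f : Hom X Y) (g : Hom Y Z) : Hom X Z := cmp g f.

Fact postcomp_is_linear X Y Z (g : Hom Y Z) : linear (@postcomp X Y Z g).
Proof. by move=> c f f'; rewrite /postcomp comp_linr. Qed.

Fact precomp_is_linear X Y Z (f : Hom X Y) : linear (@precomp X Y Z f).
Proof. by move=> c g g'; rewrite /precomp comp_linl. Qed.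

HB.instance Definition _ X Y Z (g : Hom Y Z) :=
  GRing.isLinear.Build k (Hom X Y) (Hom X Z) _ (@postcomp X Y Z g)
    (@postcomp_is_linear X Y Z g).
HB.instance Definition _ X Y Z (f : Hom X Y) :=
  GRing.isLinear.Build k (Hom Y Z) (Hom X Z) _ (@precomp X Y Z f)
    (@precomp_is_linear X Y Z f).

Lemma cmp0r X Y Z (g : Hom Y Z) : cmp g (0 : Hom X Y) = 0.
Proof. exact: (linear0 (@postcomp X Y Z g)). Qed.

Lemma cmp0l X Y Z (f : Hom X Y) : cmp (0 : Hom Y Z) f = 0.
Proof. exact: (linear0 (@precomp X Y Z f)). Qed.

Lemma cmpBr X Y Z (g : Hom Y Z) (f f' : Hom X Y) :
  cmp g (f - f') = cmp g f - cmp g f'.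
Proof. exact: (linearB (@postcomp X Y Z g)). Qed.

Lemma kernel_mono X Y K (f : Hom X Y) (i : Hom K X) : is_kernel f i -> mono i.
Proof.
case=> fi0 ker_univ W g h ig_ih.
have /ker_univ [t [_ t_uniq]] : cmp f (cmp i g) = 0 by rewrite compA fi0 cmp0l.
by rewrite -(t_uniq g erefl) (t_uniq h (esym ig_ih)).
Qed.

Lemma iso_kernel_eq0 X Y K (f : Hom X Y) (i : Hom K X) :
  is_kernel f i -> is_iso i -> f = 0.
Proof.
by case=> fi0 _ [j [_ ij1]]; rewrite -[f]compm1 -ij1 compA fi0 cmp0l.
Qed.

Lemma zero_kernel_mono X Y K (f : Hom X Y) (i : Hom K X) :
  is_kernel f i -> is_zero_obj K -> mono f.
Proof.
case=> _ ker_univ K0 W g h fg_fh.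
have /ker_univ [t [it _]] : cmp f (g - h) = 0 by rewrite cmpBr fg_fh subrr.
have t0 : t = 0 by rewrite -[t]comp1m K0 cmp0l.
by apply/eqP; rewrite -subr_eq0 -it t0 cmp0r.
Qed.

Lemma mono_endo_postcomp_surj X W (f : Hom X X) :
  mono f -> forall g : Hom W X, exists h, cmp f h = g.
Proof.
move=> monof g; set F := linfun (@postcomp W X X f).
have /lker0P F_inj : injective F by move=> u v; rewrite !lfunE; apply: monof.
by exists (F^-1%VF g); rewrite -[RHS](lker0_lfunVK F_inj) lfunE.
Qed.

End KLinearCategory.

Section MonoidalCategory.
Variables (k : fieldType) (C : kcat k) (M : smc C).
Local Notation Hom X Y := (@Mor _ C X Y).
Local Notation "f ⊗m g" := (tensm M f g) (at level 40, left associativity).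
Local Notation "'𝟙'" := (unitob M).

Definition tensml X X' Y Y' (g : Hom Y Y') (f : Hom X X') := f ⊗m g.

Fact tensml_is_linear X X' Y Y' (g : Hom Y Y') : linear (@tensml X X' Y Y' g).
Proof. by move=> c f f'; rewrite /tensml tensm_linl. Qed.

HB.instance Definition _ X X' Y Y' (g : Hom Y Y') :=
  GRing.isLinear.Build k (Hom X X') (Hom _ _) _ (@tensml X X' Y Y' g)
    (@tensml_is_linear X X' Y Y' g).

Lemma tensm0l X X' Y Y' (g : Hom Y Y') : (0 : Hom X X') ⊗m g = 0.
Proof. exact: (linear0 (@tensml X X' Y Y' g)). Qed.

Lemma tensm_split X X' Y Y' (f : Hom X X') (g : Hom Y Y') :
  f ⊗m g = cmp (idm X' ⊗m g) (f ⊗m idm Y).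
Proof. by rewrite -tensm_comp comp1m compm1. Qed.

Lemma lami_nat X X' (f : Hom X X') :
  cmp (lami M X') f = cmp (idm 𝟙 ⊗m f) (lami M X).
Proof.
rewrite -[f in LHS]compm1 -(lamKV M X) [cmp f _]compA -lam_nat.
by rewrite !compA lamK comp1m.
Qed.

Lemma alphai_nat X X' Y Y' Z Z' (f : Hom X X') (g : Hom Y Y') (h : Hom Z Z') :
  cmp (alphai M X' Y' Z') (f ⊗m (g ⊗m h)) = cmp ((f ⊗m g) ⊗m h) (alphai M X Y Z).
Proof.
rewrite -[f ⊗m (g ⊗m h)]compm1 -(alphaKV M X Y Z) [cmp (f ⊗m _) _]compA.
by rewrite -alpha_nat !compA alphaK comp1m.
Qed.

Section CommutativeAlgebra.
Variables (A : Obj C) (mu : Hom (tens M A A) A) (eta : Hom 𝟙 A).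
Hypothesis comm : comm_algebra mu eta.

Lemma mul_tensA X Y Z (f : Hom X A) (g : Hom Y A) (h : Hom Z A) :
  cmp mu (f ⊗m cmp mu (g ⊗m h))
  = cmp (cmp mu (cmp mu (f ⊗m g) ⊗m h)) (alphai M X Y Z).
Proof.
case: comm => mulA _ _ _.
have mulA' : cmp mu (idm A ⊗m mu) = cmp (cmp mu (mu ⊗m idm A)) (alphai M A A A).
  by rewrite mulA -!compA alphaKV compm1.
rewrite -[f in LHS]comp1m tensm_comp compA mulA' -!compA alphai_nat.
by rewrite [cmp (mu ⊗m _) _]compA -tensm_comp comp1m.
Qed.

Lemma mul_tensC X Y (f : Hom X A) (g : Hom Y A) :
  cmp mu (f ⊗m g) = cmp (cmp mu (g ⊗m f)) (beta M X Y).
Proof. by case: comm => _ _ _ mulC; rewrite -compA -beta_nat compA mulC. Qed.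

Lemma unit_neq0 : ~ is_zero_obj A -> eta <> 0.
Proof.
case: comm => _ mul1l _ _ A_nz eta0; apply: A_nz.
by rewrite /is_zero_obj -(lamKV M A) -mul1l eta0 tensm0l cmp0r cmp0l.
Qed.

Variable a : Hom 𝟙 A.

Definition lmul : Hom A A := cmp mu (cmp (a ⊗m idm A) (lami M A)).

Lemma lmul_comp X (f : Hom X A) : cmp lmul f = cmp mu (cmp (a ⊗m f) (lami M X)).
Proof.
rewrite /lmul -!compA lami_nat [cmp (_ ⊗m _) (cmp _ _)]compA -tensm_comp.
by rewrite compm1 comp1m.
Qed.

Lemma gamma_mul_lmul b : gamma_mul mu a b = cmp lmul b.
Proof. by rewrite lmul_comp. Qed.

Lemma lmul_unit : cmp lmul eta = cmp a (cmp (rho M 𝟙) (lami M 𝟙)).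
Proof.
case: comm => _ _ mul1r _.
rewrite lmul_comp tensm_split -[cmp (cmp _ _) _]compA compA mul1r.
by rewrite compA rho_nat -compA.
Qed.

Lemma lmul_eq0 : lmul = 0 -> a = 0.
Proof.
move=> lmul0.
have a_unitors : cmp a (cmp (rho M 𝟙) (lami M 𝟙)) = 0.
  by rewrite -lmul_unit lmul0 cmp0l.
have -> : a = cmp (cmp a (cmp (rho M 𝟙) (lami M 𝟙))) (cmp (lam M 𝟙) (rhoi M 𝟙)).
  by rewrite -!compA [cmp (lami M 𝟙) _]compA lamK comp1m rhoKV compm1.
by rewrite a_unitors cmp0l.
Qed.

Lemma lmul_kernel_ideal K (i : Hom K A) : is_kernel lmul i -> is_ideal mu i.
Proof.
move=> ker_i; have [lmul_i0 ker_univ] := ker_i.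
have a_i0 : cmp mu (a ⊗m i) = 0.
  rewrite -[a ⊗m i]compm1 -(lamK M K) [cmp (a ⊗m i) _]compA compA -lmul_comp.
  by rewrite lmul_i0 cmp0l.
have lmul_ideal0 : cmp lmul (cmp mu (idm A ⊗m i)) = 0.
  rewrite mul_tensC compA lmul_comp compA mul_tensA a_i0 tensm0l.
  by rewrite cmp0r !cmp0l.
split; first exact: kernel_mono ker_i.
by have [act [act_i _]] := ker_univ _ _ lmul_ideal0; exists act.
Qed.

Lemma gamma_mul_right_inverse :
  simple_algebra mu -> (exists K (i : Hom K A), is_kernel lmul i) -> a <> 0 ->
  exists b, gamma_mul mu a b = eta.
Proof.
case=> _ ideal_triv [K [i ker_i]] a_nz.
case: (ideal_triv K i (lmul_kernel_ideal ker_i)) => [K0 | iso_i].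
- have [b lmul_b] := mono_endo_postcomp_surj (zero_kernel_mono ker_i K0) eta.
  by exists b; rewrite gamma_mul_lmul.
- by case: a_nz; apply: lmul_eq0; apply: iso_kernel_eq0 ker_i iso_i.
Qed.

End CommutativeAlgebra.
End MonoidalCategory.

Theorem proposition2p1 (k : fieldType) (T : preTannakian k) (A : Obj (ptC T))
  (mu : Mor (tens (ptM T) A A) A) (eta : Mor (unitob (ptM T)) A) :
  comm_algebra mu eta -> simple_algebra mu ->
  gamma_is_field mu eta.
Proof.
move=> comm simple; have [_ _ kernels _ _] := pt_abelian T.
split; first exact: unit_neq0 comm simple.1.
move=> a a_nz; have [kernel_lmul _] := kernels _ _ (lmul mu a).
exact: gamma_mul_right_inverse comm a simple kernel_lmul a_nz.
Qed.
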